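(* Let $X$ be a nonvanishing correlator of type $X_{-1}$, let $W_j$ be an atomic summand of $W$, and let $S$ be a set of loop indices in $W_j$ obeying the NP-rule. Then $K_S:=\sum_{i\in S}K_i\ge0$. Moreover: if $K_S=0$, then the sequence $(K_i)_{i\in S}$ is a concatenation of blocks $(0)$ and $(-1,1)$; if $K_S=1$, then $(K_i)_{i\in S}$ is a concatenation of blocks $(0)$ and $(-1,1)$ together with exactly one block $(1)$, $(-1,2)$ or $(-2,3)$, and if $(K_i,K_{i+1})=(-2,3)$ is that block then $a_i=2$.
   Context: $W=\bigoplus_jW_j$ is an invertible polynomial, disjoint sum of atomic summands: Fermat $x^a$, chain $x_1^{a_1}x_2+\dots+x_{N-1}^{a_{N-1}}x_N+x_N^{a_N}$, loop $x_1^{a_1}x_2+\dots+x_N^{a_N}x_1$ (variables relabeled within each summand; indices of a loop are taken mod its length). A genus-zero correlator (B-model of $W^T$, or A-model of $(W,G_W)$ via Krawitz's map) is of type $X_{-1}$ if it has at least four insertions, has the form $\langle x_N,\dots,x_N,\dots,x_1,\dots,x_1,\alpha,\beta\rangle$ with $x_i$ appearing $\ell_i\ge0$ times and $\alpha=\prod x_i^{m_i}$, $\beta=\prod x_i^{n_i}$ monomials of the standard basis of $\mathrm{Jac}(W^T)$ (in particular $m_i+n_i\le2a_i-2$ for chain and loop variables), and, with $b=E_W^{-1}(\ell+m+n+2\cdot\mathbf 1)$ and $K_i=\ell_i-b_i+1$, satisfies $K_i\in\mathbb Z$ and $\sum_iK_i=1$. An index $i$ (in a chain or loop summand) is a loop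 index if $a_ib_i+b_{i+1}=\ell_i+m_i+n_i+2$; all indices of a loop and all indices $i<N$ of a chain are loop indices. A set $S$ of loop indices obeys the NP-rule if for every $i\in S$ with $K_i<0$ also $i+1\in S$. The standard basis of $\mathrm{Jac}(W^T)$: $x^r$, $r\le a-2$ (Fermat); for chain transpose $x_1^{a_1}+x_1x_2^{a_2}+\dots+x_{N-1}x_N^{a_N}$, $\prod x_i^{r_i}$ with $r_i\le a_i-1$ excluding $r_N=a_N-1,r_{N-1}=0,\dots,r_{N-2l}=a_{N-2l}-1,r_{N-2l-1}\ge1$; for loop transpose, all $\prod x_i^{r_i}$, $r_i<a_i$; products across summands. *)

From mathcomp Require Import all_boot all_order all_algebra.
Set Implicit Arguments. Unset Strict Implicit. Unset Printing Implicit Defensive.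
Import Order.TTheory GRing.Theory Num.Theory.

(* Atomic summands of an invertible polynomial W.  Variables of a summand are
   indexed 0-based: index i here is x_(i+1) of the paper.
   - Fermat a        :  x^a
   - Chain [a_1..a_N]:  x_1^a_1 x_2 + ... + x_(N-1)^a_(N-1) x_N + x_N^a_N
   - Loop  [a_1..a_N]:  x_1^a_1 x_2 + ... + x_N^a_N x_1                    *)
Inductive atom := Fermat of nat | Chain of seq nat | Loop of seq nat.

Definition atom_default : atom := Fermat 2.

Definition alen (A : atom) : nat :=
  match A with Fermat _ => 1 | Chain s => size s | Loop s => size s end.

Definition expo (A : atom) (i : nat) : nat :=
  match A with Fermat a => a | Chain s => nth 0 s i | Loop s => nth 0 s i end.

Definition wf_atom (A : atom) : Prop :=
  match A with
  | Fermat a => 2 <= a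
  | Chain s => 1 <= size s /\ all (fun a => 2 <= a) s
  | Loop s => 2 <= size s /\ all (fun a => 2 <= a) s
  end.

Definition asucc (A : atom) (i : nat) : nat :=
  match A with Loop s => i.+1 %% size s | _ => i.+1 end.

(* the term b_(i+1) occurring in row i of E_W b (0 if there is no x_(i+1)
   in the i-th monomial, i.e. Fermat, or last index of a chain) *)
Definition nextb (A : atom) (bj : nat -> rat) (i : nat) : rat :=
  match A with
  | Fermat _ => 0%R
  | Chain s => if i.+1 < size s then bj i.+1 else 0%R
  | Loop s => bj (i.+1 %% size s)
  end.

Definition EWrow (A : atom) (bj : nat -> rat) (i : nat) : rat :=
  ((expo A i)%:R * bj i + nextb A bj i)%R.

Definition is_chain_or_loop (A : atom) : bool :=
  match A with Fermat _ => false | _ => true end.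

Definition loop_index (A : atom) (bj : nat -> rat) (vj : nat -> nat) (i : nat) : Prop :=
  is_chain_or_loop A /\ i < alen A /\ EWrow A bj i = ((vj i)%:R)%R.

(* excluded exponent pattern in the basis of Jac of a chain transpose
   x_1^a_1 + x_1 x_2^a_2 + ... + x_(N-1) x_N^a_N :
   r_N = a_N - 1, r_(N-1) = 0, ..., r_(N-2l) = a_(N-2l) - 1, r_(N-2l-1) >= 1
   (the last condition being vacuous when N - 2l - 1 = 0); 0-based here. *)
Definition chain_excluded (s : seq nat) (r : nat -> nat) : Prop :=
  let N := size s in
  exists l : nat,
    2 * l + 1 <= N /\
    (forall k, k <= l -> r (N - 1 - 2 * k) = nth 0 s (N - 1 - 2 * k) - 1) /\
    (forall k, k < l -> r (N - 2 - 2 * k) = 0) /\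
    (2 * l + 1 = N \/ 1 <= r (N - 2 - 2 * l)).

(* the monomial prod_i x_i^(r i) (restricted to the summand) belongs to the
   standard basis of Jac(A^T) *)
Definition std_basis (A : atom) (r : nat -> nat) : Prop :=
  match A with
  | Fermat a => r 0 <= a - 2
  | Chain s => (forall i, i < size s -> r i <= nth 0 s i - 1) /\ ~ chain_excluded s r
  | Loop s => forall i, i < size s -> r i < nth 0 s i
  end.

(* A genus-zero correlator <x_N..x_N, ..., x_1..x_1, alpha, beta> of type X_{-1}
   for W = (+)_j W_j (W = list of atoms).  l j i = multiplicity of the variable
   x_i of W_j, m, n = exponents of alpha, beta; b = E_W^{-1}(l+m+n+2),
   given through its defining linear system; K j i = l_i - b_i + 1 (integers). *)
Definition vvec (l m n : nat -> nat -> nat) (j i : nat) : nat :=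
  l j i + m j i + n j i + 2.

Definition type_Xm1 (W : seq atom) (l m n : nat -> nat -> nat)
    (b : nat -> nat -> rat) (K : nat -> nat -> int) : Prop :=
  (* at least four insertions *)
      4 <= (\sum_(j < size W) \sum_(i < alen (nth atom_default W j)) l j i) + 2 /\
      (forall j, j < size W -> std_basis (nth atom_default W j) (m j)) /\
      (forall j, j < size W -> std_basis (nth atom_default W j) (n j)) /\
      (forall j i, j < size W -> i < alen (nth atom_default W j) ->
         EWrow (nth atom_default W j) (b j) i = ((vvec l m n j i)%:R)%R) /\
      (forall j i, j < size W -> i < alen (nth atom_default W j) ->
         ((K j i)%:~R = (l j i)%:R - b j i + 1 :> rat)%R) /\
      (\sum_(j < size W) \sum_(i < alen (nth atom_default W j)) K j i = 1)%R.

Definition NP_rule (A : atom) (Kj : nat -> int) (S : seq nat) : Prop :=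
  forall i, i \in S -> (Kj i < 0)%R -> asucc A i \in S.

Definition zero_block (A : atom) (Kj : nat -> int) (B : seq nat) : Prop :=
  exists i, (B = [:: i] /\ Kj i = 0%R) \/
            (B = [:: i; asucc A i] /\ Kj i = (-1)%R /\ Kj (asucc A i) = 1%R).

Definition one_block (A : atom) (Kj : nat -> int) (B : seq nat) : Prop :=
  exists i, (B = [:: i] /\ Kj i = 1%R) \/
            (B = [:: i; asucc A i] /\ Kj i = (-1)%R /\ Kj (asucc A i) = 2%R) \/
            (B = [:: i; asucc A i] /\ Kj i = (-2)%R /\ Kj (asucc A i) = 3%R /\
             expo A i = 2).

From mathcomp Require Import all_boot all_order all_algebra.
Import Order.TTheory GRing.Theory Num.Theory.
From mathcomp Require Import zify lra.
Set Implicit Arguments. Unset Strict Implicit.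

(* At a loop index i with K_i < 0, substituting b = l + 1 - K into the row
   a_i b_i + b_(i+1) = l_i + m_i + n_i + 2 and using m_i + n_i <= 2 a_i - 2
   gives K_i + K_(i+1) >= (a_i - 1)(-K_i - 1) >= 0, so in particular
   K_(i+1) > 0.  By the NP-rule and injectivity of i |-> i+1, S then splits
   into singletons {i} with K_i >= 0 and disjoint pairs {i, i+1} with K_i < 0,
   all of nonnegative sum.  When K_S is 0 or 1, every block but at most one
   has sum 0, and the inequality leaves only the listed blocks. *)

Definition pair_bound (a : nat) (x y : int) : Prop :=
  (2 <= a)%N /\ ((a%:Z - 1) * (- x - 1) <= x + y)%R.

Section PairBound.
Local Open Scope ring_scope.
Variables (a : nat) (x y : int).
Hypotheses (pb : pair_bound a x y) (x_lt0 : x < 0).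

Lemma pair_bound_gt0 : 0 < y.
Proof. by case: pb => a_ge2; nia. Qed.

Lemma pair_bound_sum_ge0 : 0 <= x + y.
Proof. by case: pb => a_ge2; nia. Qed.

Lemma pair_bound_sum_eq0 : x + y = 0 -> x = -1 /\ y = 1.
Proof. by case: pb => a_ge2; nia. Qed.

Lemma pair_bound_sum_eq1 :
  x + y = 1 -> (x = -1 /\ y = 2) \/ [/\ x = -2, y = 3 & a = 2%N].
Proof.
case: pb => a_ge2 bound sum1.
have x_ge : -2 <= x.
  have : 0 <= (a%:Z - 2) * (- x - 1) by apply: mulr_ge0; lia.
  lia.
have [x_eq|x_eq] : x = -1 \/ x = -2 by lia.
- by left; lia.
- by right; split; nia.
Qed.

End PairBound.

Lemma loop_row_pair_bound (a li lf mi ni : nat) (ki kf : int) (bi bf : rat) :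
  (2 <= a)%N -> (mi + ni + 2 <= 2 * a)%N ->
  (a%:R * bi + bf = (li + mi + ni + 2)%:R)%R ->
  (ki%:~R = li%:R - bi + 1)%R -> (kf%:~R = lf%:R - bf + 1)%R ->
  pair_bound a ki kf.
Proof.
move=> a_ge2 mn_le row Ki Kf; split => //.
rewrite -(ler_int rat) !(rmorphM, rmorphD, rmorphB, rmorphN, rmorph1) /= Ki Kf.
have a_ge2' : (2 <= a%:R :> rat)%R by rewrite (ler_nat rat 2).
have mn_le' : (mi%:R + ni%:R + 2 <= 2 * a%:R :> rat)%R.
  by move: mn_le; rewrite -(ler_nat rat) !natrD; lra.
have li_ge0 : (0 <= li%:R :> rat)%R by [].
have lf_ge0 : (0 <= lf%:R :> rat)%R by [].
rewrite !natrD in row.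
nra.
Qed.

Definition pairing_block (k : nat -> int) (f : nat -> nat) (Q : nat -> Prop)
    (B : seq nat) : Prop :=
  (exists i, B = [:: i] /\ (0 <= k i)%R) \/
  (exists i, [/\ B = [:: i; f i], (k i < 0)%R & Q i]).

Lemma pairing_decomposition (k : nat -> int) (f : nat -> nat) (Q : nat -> Prop)
    (S : seq nat) :
  uniq S -> {in S &, injective f} ->
  (forall i, i \in S -> (k i < 0)%R -> [/\ f i \in S, Q i & (0 < k (f i))%R]) ->
  exists Bs : seq (seq nat),
    perm_eq (flatten Bs) S /\ forall B, B \in Bs -> pairing_block k f Q B.
Proof.
have [n] := ubnP (size S); elim: n S => // n IH S /ltnSE S_small S_uniq f_inj pairS.
have [/hasP[x xS x_neg] | /hasPn S_nonneg] := boolP (has (fun i => k i < 0)%R S); last first.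
  exists [seq [:: i] | i <- S]; rewrite flatten_seq1; split => // _ /mapP[i iS ->].
  by left; exists i; rewrite leNgt S_nonneg.
have [fxS Qx fx_pos] := pairS x xS x_neg.
have x_neq_fx : x != f x by apply: contraTneq fx_pos => <-; rewrite -leNgt ltW.
pose S' := [seq y <- S | (y != x) && (y != f x)].
have S_perm : perm_eq (x :: f x :: S') S.
  apply: uniq_perm => [|//|y].
    rewrite /= /S' !mem_filter !eqxx andbF /= inE negb_or x_neq_fx /=.
    by rewrite mem_filter eqxx /= filter_uniq.
  rewrite !inE mem_filter.
  by case: (eqVneq y x) => [->|] //=; case: (eqVneq y (f x)) => [->|].
have [||||Bs [Bs_perm Bs_ok]] := IH S'.
- by have := perm_size S_perm; rewrite /=; lia.
- exact: filter_uniq.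
- by move=> i j; rewrite !mem_filter => /andP[_ iS] /andP[_ jS]; exact: f_inj.
- move=> i; rewrite mem_filter => /andP[/andP[i_neq_x i_neq_fx] iS] i_neg.
  have [fiS Qi fi_pos] := pairS i iS i_neg.
  split=> //; rewrite mem_filter fiS andbT.
  apply/andP; split; last by apply: contra_neq i_neq_x => /f_inj ->.
  by apply: contraTneq fi_pos => ->; rewrite -leNgt ltW.
exists ([:: x; f x] :: Bs); split.
  by apply: perm_trans S_perm; rewrite /= !perm_cons.
move=> B; rewrite inE => /predU1P[->|]; last exact: Bs_ok.
by right; exists x.
Qed.

Lemma psumr_seq_eq0 (R : numDomainType) (T : eqType) (r : seq T) (F : T -> R) :
  (forall x, x \in r -> 0 <= F x)%R -> (\sum_(x <- r) F x = 0)%R ->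
  forall x, x \in r -> F x = 0%R.
Proof.
move=> F_ge0 /eqP; rewrite big_seq psumr_eq0 // => /allP F_eq0 x xr.
by apply/eqP; have := F_eq0 x xr; rewrite xr.
Qed.

Lemma psumr_int_eq1 (T : eqType) (r : seq T) (F : T -> int) :
  (forall x, x \in r -> 0 <= F x)%R -> (\sum_(x <- r) F x = 1)%R ->
  exists2 x, x \in r & F x = 1%R /\ forall y, y \in rem x r -> F y = 0%R.
Proof.
move=> F_ge0 sum1.
have [/hasP[x xr Fx_neq0] | /hasPn F_eq0] := boolP (has (fun x => F x != 0%R) r); last first.
  by move: sum1; rewrite big_seq big1 // => x /F_eq0 /negPn /eqP.
have rem_ge0 y : y \in rem x r -> (0 <= F y)%R by move/mem_rem; exact: F_ge0.
have sum_rem_ge0 : (0 <= \sum_(y <- rem x r) F y)%R.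
  by rewrite big_seq; apply: sumr_ge0 => y; exact: rem_ge0.
have Fx_gt0 : (0 < F x)%R by rewrite lt0r Fx_neq0 F_ge0.
have sum_split : (\sum_(y <- r) F y = F x + \sum_(y <- rem x r) F y)%R.
  by rewrite (perm_big _ (perm_to_rem xr)) big_cons.
rewrite sum_split in sum1.
have Fx1 : F x = 1%R by lia.
have sum_rem0 : (\sum_(y <- rem x r) F y = 0)%R by lia.
by exists x => //; split => // y /(psumr_seq_eq0 rem_ge0 sum_rem0).
Qed.

Lemma asucc_inj (A : atom) (i i' : nat) :
  i < alen A -> i' < alen A -> asucc A i = asucc A i' -> i = i'.
Proof.
case: A => [a|s|s] /=; [by move=> _ _ [] | by move=> _ _ [] |].
by move=> lt_i lt_i' /eqP; rewrite -[i.+1]addn1 -[i'.+1]addn1 eqn_modDr !modn_small // => /eqP.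
Qed.

Lemma nextb_asucc (A : atom) (bj : nat -> rat) (i : nat) :
  is_chain_or_loop A -> asucc A i < alen A -> nextb A bj i = bj (asucc A i).
Proof. by case: A => //= s _ ->. Qed.

Lemma wf_expo_ge2 (A : atom) (i : nat) :
  wf_atom A -> is_chain_or_loop A -> i < alen A -> 2 <= expo A i.
Proof. by case: A => //= s [_ /allP s_ge2] _ lt_i; exact/s_ge2/mem_nth. Qed.

Lemma std_basis_exps_le (A : atom) (r r' : nat -> nat) (i : nat) :
  wf_atom A -> is_chain_or_loop A -> i < alen A ->
  std_basis A r -> std_basis A r' -> r i + r' i + 2 <= 2 * expo A i.
Proof.
move=> wfA clA lt_i; have := wf_expo_ge2 wfA clA lt_i.
case: A wfA clA lt_i => //= s _ _ lt_i a_ge2.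
- by move=> [/(_ i lt_i) ri_le _] [/(_ i lt_i) r'i_le _]; lia.
- by move=> /(_ i lt_i) ri_lt /(_ i lt_i) r'i_lt; lia.
Qed.

Definition loop_pair_bound (A : atom) (k : nat -> int) (i : nat) : Prop :=
  pair_bound (expo A i) (k i) (k (asucc A i)).

Definition loop_block (A : atom) (k : nat -> int) : seq nat -> Prop :=
  pairing_block k (asucc A) (loop_pair_bound A k).

Lemma loop_block_sum_ge0 (A : atom) (k : nat -> int) (B : seq nat) :
  loop_block A k B -> (0 <= \sum_(i <- B) k i)%R.
Proof.
case=> [[i [-> ki_ge0]] | [i [-> ki_lt0 pb]]]; rewrite !big_cons big_nil addr0 //.
exact: pair_bound_sum_ge0 pb ki_lt0.
Qed.

Lemma loop_block_sum_eq0 (A : atom) (k : nat -> int) (B : seq nat) :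
  loop_block A k B -> (\sum_(i <- B) k i = 0)%R -> zero_block A k B.
Proof.
case=> [[i [-> _]] | [i [-> ki_lt0 pb]]]; rewrite !big_cons big_nil addr0 => sum0.
  by exists i; left.
by exists i; right; have [] := pair_bound_sum_eq0 pb ki_lt0 sum0.
Qed.

Lemma loop_block_sum_eq1 (A : atom) (k : nat -> int) (B : seq nat) :
  loop_block A k B -> (\sum_(i <- B) k i = 1)%R -> one_block A k B.
Proof.
case=> [[i [-> _]] | [i [-> ki_lt0 pb]]]; rewrite !big_cons big_nil addr0 => sum1.
  by exists i; left.
exists i; right.
by case: (pair_bound_sum_eq1 pb ki_lt0 sum1) => [[]|[]]; [left | right].
Qed.

Lemma type_Xm1_loop_pair_bound (W : seq atom) (l m n : nat -> nat -> nat)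
    (b : nat -> nat -> rat) (K : nat -> nat -> int) (j i : nat) :
  let A := nth atom_default W j in
  wf_atom A -> type_Xm1 W l m n b K -> j < size W ->
  is_chain_or_loop A -> i < alen A -> asucc A i < alen A ->
  loop_pair_bound A (K j) i.
Proof.
move=> A wfA [_ [std_m [std_n [rows [Kdef _]]]]] jW clA lt_i lt_si.
have a_ge2 := wf_expo_ge2 wfA clA lt_i.
have mn_le := std_basis_exps_le wfA clA lt_i (std_m j jW) (std_n j jW).
have row := rows j i jW lt_i; rewrite /EWrow (nextb_asucc _ clA lt_si) in row.
exact: loop_row_pair_bound a_ge2 mn_le row (Kdef j i jW lt_i) (Kdef j _ jW lt_si).
Qed.

Theorem lemma6p3 (W : seq atom) (l m n : nat -> nat -> nat)
    (b : nat -> nat -> rat) (K : nat -> nat -> int) :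
  (forall j, j < size W -> wf_atom (nth atom_default W j)) ->
  type_Xm1 W l m n b K ->
  forall (j : nat) (S : seq nat),
    j < size W ->
    uniq S ->
    (forall i, i \in S -> loop_index (nth atom_default W j) (b j) (vvec l m n j) i) ->
    NP_rule (nth atom_default W j) (K j) S ->
    let KS := (\sum_(i <- S) K j i)%R in
    [/\ (0 <= KS)%R,
        KS = 0%R ->
          exists Bs : seq (seq nat),
            perm_eq (flatten Bs) S /\
            (forall B, B \in Bs -> zero_block (nth atom_default W j) (K j) B) &
        KS = 1%R ->
          exists (B0 : seq nat) (Bs : seq (seq nat)),
            perm_eq (B0 ++ flatten Bs) S /\
            one_block (nth atom_default W j) (K j) B0 /\
            (forall B, B \in Bs -> zero_block (nth atom_default W j) (K j) B)].
Proof.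
move=> wfW Xm1 j S jW S_uniq S_loop S_NP KS.
set A := nth atom_default W j in S_loop S_NP *.
have S_pairs i : i \in S -> (K j i < 0)%R ->
    [/\ asucc A i \in S, loop_pair_bound A (K j) i & (0 < K j (asucc A i))%R].
  move=> iS i_neg; have siS := S_NP i iS i_neg.
  have [clA [lt_i _]] := S_loop i iS; have [_ [lt_si _]] := S_loop _ siS.
  have pb := type_Xm1_loop_pair_bound (wfW j jW) Xm1 jW clA lt_i lt_si.
  by split=> //; exact: pair_bound_gt0 pb i_neg.
have S_inj : {in S &, injective (asucc A)}.
  by move=> i i' /S_loop[_ [lt_i _]] /S_loop[_ [lt_i' _]]; exact: asucc_inj.
have [Bs [Bs_perm Bs_loop]] := pairing_decomposition S_uniq S_inj S_pairs.
have block_ge0 B : B \in Bs -> (0 <= \sum_(i <- B) K j i)%R.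
  by move/Bs_loop/loop_block_sum_ge0.
rewrite /KS -(perm_big _ Bs_perm) big_flatten; split.
- by rewrite big_seq; exact: sumr_ge0.
- move=> sum0; exists Bs; split=> // B B_in.
  exact: loop_block_sum_eq0 (Bs_loop B B_in) (psumr_seq_eq0 block_ge0 sum0 B_in).
- case/(psumr_int_eq1 block_ge0) => B0 B0_in [sum_B0 rest0].
  exists B0, (rem B0 Bs); split; last split.
  + apply: perm_trans Bs_perm; rewrite perm_sym.
    exact: perm_flatten (perm_to_rem B0_in).
  + exact: loop_block_sum_eq1 (Bs_loop _ B0_in) sum_B0.
  + move=> B B_in.
    exact: loop_block_sum_eq0 (Bs_loop _ (mem_rem B_in)) (rest0 _ B_in).
Qed.
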